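(* Let $d$ be a positive integer and $q$ a prime power with $(d,q)\notin\{(1,2),(1,3),(2,2)\}$. Then every element of $\operatorname{GL}_d(q)$ is a product of two fixed-point-free elements of $\operatorname{GL}_d(q)$, where $A\in\operatorname{GL}_d(q)$ is called fixed-point-free if the only vector $v\in\mathbb{F}_q^d$ with $vA=v$ is $v=0$ (equivalently, $A$ is a derangement in the natural action of $\operatorname{GL}_d(q)$ on $\mathbb{F}_q^d\setminus\{0\}$).
   Context: $\operatorname{GL}_d(q)$ is the group of invertible $(d\times d)$-matrices over $\mathbb{F}_q$, acting on row vectors by right multiplication. *)

From HB Require Import structures.
From mathcomp Require Import all_boot all_order all_algebra all_field.
Set Implicit Arguments. Unset Strict Implicit. Unset Printing Implicit Defensive.
Import GRing.Theory.
Local Open Scope ring_scope.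

Definition fixed_point_free (F : fieldType) (d : nat) (A : 'M[F]_d) : Prop :=
  forall v : 'rV[F]_d, v *m A = v -> v = 0.

From HB Require Import structures.
From mathcomp Require Import all_boot all_order all_algebra all_field.
From mathcomp Require Import ring.

(* If X, X - 1 and X - A are invertible, then A = X (X^-1 A) is a product of
   two fixed-point-free matrices: v X = v means v (X - 1) = 0, and
   v X^-1 A = v means (v X^-1) (X - A) = 0.  Such an X is built by induction
   on the dimension.  Write A = [[a, b], [c, D]] and let W be a witness for D;
   then X = [[x, y], [z, W]] is a witness for A as soon as the scalar x avoids
   three values given by Schur complements.  For q >= 4 take y = z = 0; for
   q = 3, y and z can be chosen to make two of the values coincide; for q = 2
   they can make all three coincide once b != 0, which transposition and
   conjugation arrange unless A is scalar.  The base cases (d, q) = (2, 3) and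
   (3, 2) are settled by exhaustive computation. *)

Set Implicit Arguments. Unset Strict Implicit. Unset Printing Implicit Defensive.
Import GRing.Theory.
Local Open Scope ring_scope.

Lemma exists_notin_seq (T : finType) (s : seq T) : (#|s| < #|T|)%N -> exists x, x \notin s.
Proof.
move=> lt_s_T; have /subsetPn[x _ x_notin_s] : ~~ (T \subset s).
  by apply: contraL lt_s_T => /subset_leq_card le_T_s; rewrite -leqNgt.
by exists x.
Qed.

Lemma mxBE (V : zmodType) m n (A B : 'M[V]_(m, n)) i j : (A - B) i j = A i j - B i j.
Proof. by rewrite !mxE. Qed.

Lemma mxNE (V : zmodType) m n (A : 'M[V]_(m, n)) i j : (- A) i j = - A i j.
Proof. by rewrite mxE. Qed.

Lemma scalar_mx11E (R : pzRingType) (a : R) : (a%:M : 'M[R]_1) 0 0 = a.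
Proof. by rewrite mxE mulr1n. Qed.

Section Determinants.
Variable R : comNzRingType.

Lemma det_mx22 (A : 'M[R]_2) : \det A = A 0 0 * A 1 1 - A 0 1 * A 1 0.
Proof.
rewrite (expand_det_row _ 0) !big_ord_recl big_ord0 /cofactor !det_mx11 !mxE /=.
rewrite addr0 expr0 expr1 !mul1r mulN1r mulrN.
by congr (_ * _ - _ * _); congr (A _ _); apply: val_inj.
Qed.

Lemma det_mx33 (A : 'M[R]_3) :
  \det A = A 0 0 * A 1 1 * A 2 2 + A 0 1 * A 1 2 * A 2 0 + A 0 2 * A 1 0 * A 2 1
         - (A 0 0 * A 1 2 * A 2 1 + A 0 1 * A 1 0 * A 2 2 + A 0 2 * A 1 1 * A 2 0).
Proof.
pose a (i j : nat) := A (inord i) (inord j).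
have A_val (i j : 'I_3) : A i j = a i j by rewrite /a !inord_val.
rewrite (expand_det_row _ 0) !big_ord_recl big_ord0 /cofactor.
rewrite !(expand_det_row _ 0) !big_ord_recl !big_ord0 /cofactor !det_mx11 !mxE !A_val /=.
ring.
Qed.

End Determinants.

Section Schur.
Variable R : comUnitRingType.

Lemma det_block_mx_Schur m n (A : 'M[R]_m) B C (D : 'M[R]_n) : D \in unitmx ->
  \det (block_mx A B C D) = \det (A - B *m invmx D *m C) * \det D.
Proof.
move=> D_unit.
have -> : block_mx A B C D =
    block_mx 1%:M (B *m invmx D) 0 1%:M *m block_mx (A - B *m invmx D *m C) 0 C D.
  by rewrite mulmx_block !mul1mx !mul0mx ?mulmx0 ?add0r ?addr0 subrK mulmxKV.
by rewrite det_mulmx det_ublock det_lblock !det1 !mul1r.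
Qed.

Lemma unitmx_block_Schur m n (A : 'M[R]_m) B C (D : 'M[R]_n) : D \in unitmx ->
  (block_mx A B C D \in unitmx) = (A - B *m invmx D *m C \in unitmx).
Proof.
by move=> D_unit; rewrite !unitmxE det_block_mx_Schur // unitrM -!unitmxE D_unit andbT.
Qed.

End Schur.

Lemma natr_inj_pchar (R : nzRingType) p : p \in [pchar R] ->
  injective (fun k : 'I_p => k%:R : R).
Proof.
move=> pcharR i j eq_ij; apply: val_inj => /=.
wlog le_ij : i j eq_ij / (i <= j)%N.
  by move=> wlog_ij; case: (leqP i j) => [|/ltnW] /wlog_ij ->.
have : (p %| j - i)%N by rewrite (dvdn_pcharf pcharR) natrB // eq_ij subrr.
by rewrite -eqn_mod_dvd // !modn_small // => /eqP.
Qed.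

Section PrimeCard.
Variables (F : finFieldType) (p : nat).
Hypotheses (p_prime : prime p) (F_card : #|F| = p).

Lemma pchar_card_prime : p \in [pchar F].
Proof. by apply: (@card_finPcharP F p 1); rewrite ?expn1. Qed.

Lemma natr_onto_card_prime (x : F) : exists k, (k < p)%N && (k%:R == x).
Proof.
have /codomP[k ->] : x \in codom (fun k : 'I_p => k%:R : F).
  by apply: inj_card_onto; rewrite ?card_ord ?F_card //; apply/natr_inj_pchar/pchar_card_prime.
by exists k; rewrite ltn_ord eqxx.
Qed.

End PrimeCard.

Section Avoidable.
Variable F : fieldType.

Definition avoids n (X A : 'M[F]_n) :=
  [/\ X \in unitmx, X - 1%:M \in unitmx & X - A \in unitmx].

Definition avoidable n (A : 'M[F]_n) := exists X, avoids X A.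

Lemma fixed_point_free_unit_subr1 n (A : 'M[F]_n) :
  A - 1%:M \in unitmx -> fixed_point_free A.
Proof.
by move=> A1_unit v vA; rewrite -[v](mulmxK A1_unit) mulmxBr mulmx1 vA subrr mul0mx.
Qed.

Lemma avoidable_fpf_factor n (A : 'M[F]_n) : avoidable A -> A \in unitmx ->
  exists B C : 'M[F]_n,
    [/\ B \in unitmx, C \in unitmx,
        fixed_point_free B, fixed_point_free C & A = B *m C].
Proof.
move=> [X [X_unit X1_unit XA_unit]] A_unit.
exists X, (invmx X *m A); split; last by rewrite mulKVmx.
- exact: X_unit.
- by rewrite unitmx_mul unitmx_inv X_unit.
- exact: fixed_point_free_unit_subr1.
apply: fixed_point_free_unit_subr1.
have -> : invmx X *m A - 1%:M = - 1 *: (invmx X *m (X - A)).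
  by rewrite scaleN1r mulmxBr mulVmx // opprB.
by rewrite unitmxZ ?unitrN1 // unitmx_mul unitmx_inv X_unit.
Qed.

Lemma avoidable_conj n (P Q A : 'M[F]_n) :
  P *m Q = 1%:M -> avoidable (Q *m A *m P) -> avoidable A.
Proof.
move=> PQ [X [X_unit X1_unit XA_unit]].
have [P_unit Q_unit] := mulmx1_unit PQ.
have conjB (Y Z : 'M[F]_n) : P *m Y *m Q - P *m Z *m Q = P *m (Y - Z) *m Q.
  by rewrite mulmxBr mulmxBl.
have conjA : P *m (Q *m A *m P) *m Q = A by rewrite !mulmxA PQ mul1mx -mulmxA PQ mulmx1.
have conj1 : P *m 1%:M *m Q = 1%:M by rewrite mulmx1 PQ.
exists (P *m X *m Q); split.
- by rewrite !unitmx_mul P_unit X_unit Q_unit.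
- by rewrite -{1}conj1 conjB !unitmx_mul P_unit X1_unit Q_unit.
- by rewrite -{1}conjA conjB !unitmx_mul P_unit XA_unit Q_unit.
Qed.

Lemma avoidable_tr n (A : 'M[F]_n) : avoidable A^T -> avoidable A.
Proof.
move=> [X [X_unit X1_unit XA_unit]]; exists X^T; split.
- by rewrite unitmx_tr.
- by rewrite -trmx1 -linearB unitmx_tr.
- by rewrite -[A]trmxK -linearB unitmx_tr.
Qed.

Lemma avoidable_dim0 (A : 'M[F]_0) : avoidable A.
Proof. by exists 1%:M; split; rewrite unitmxE det_mx00 unitr1. Qed.

Lemma unitmx11 (A : 'M[F]_1) : (A \in unitmx) = (A 0 0 != 0).
Proof. by rewrite unitmxE det_mx11 unitfE. Qed.

Lemma avoidable_block n (a : 'M[F]_1) b c (D : 'M[F]_n) W y z :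
  avoids W D ->
  (exists x, x \notin [:: (y *m invmx W *m z) 0 0;
                          1 + (y *m invmx (W - 1%:M) *m z) 0 0;
                          a 0 0 + ((y - b) *m invmx (W - D) *m (z - c)) 0 0]) ->
  avoidable (block_mx a b c D).
Proof.
case=> W_unit W1_unit WD_unit [x]; rewrite !inE !negb_or => /and3P[x_W x_W1 x_WD].
exists (block_mx x%:M y z W).
rewrite /avoids (scalar_mx_block 1 n 1) !opp_block_mx !add_block_mx !subr0.
rewrite !unitmx_block_Schur // !unitmx11 !mxBE !scalar_mx11E.
by split; rewrite -?addrA -?opprD subr_eq0.
Qed.

End Avoidable.

Section LargeFields.
Variable F : finFieldType.

Lemma avoidable_card_gt3 n (A : 'M[F]_n) : (3 < #|F|)%N -> avoidable A.
Proof.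
move=> F_gt3; elim: n A => [|n IHn] A; first exact: avoidable_dim0.
change 'M[F]_(1 + n) in A; rewrite -[A]submxK; have [W avW] := IHn (drsubmx A).
apply: (avoidable_block (y := 0) (z := 0) avW); apply: exists_notin_seq.
exact: leq_ltn_trans (card_size _) _.
Qed.

Lemma avoidable_block_card_gt2 n (a : 'M[F]_1) b c (D : 'M[F]_n.+1) :
  (2 < #|F|)%N -> avoidable D -> avoidable (block_mx a b c D).
Proof.
move=> F_gt2 [W avW]; have [W_unit W1_unit _] := avW.
pose y : 'rV[F]_n.+1 := delta_mx 0 0; pose w : 'cV[F]_n.+1 := delta_mx 0 0.
(* This choice of z makes the first two forbidden values coincide. *)
pose z := - ((W - 1%:M) *m (W *m w)).
have yw : (y *m w) 0 0 = 1 by rewrite mul_delta_mx mxE !eqxx.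
have yWz : y *m invmx W *m z = y *m w - y *m W *m w.
  rewrite /z mulmxN -!mulmxA [invmx W *m _]mulmxA mulmxBr mulVmx // mulmx1.
  by rewrite mulmxBl mul1mx mulKmx // mulmxBr opprB.
have yW1z : y *m invmx (W - 1%:M) *m z = - (y *m W *m w).
  by rewrite /z mulmxN -!mulmxA [invmx (W - 1%:M) *m _]mulmxA mulVmx // mul1mx !mulmxA.
apply: (avoidable_block (y := y) (z := z) avW); apply: exists_notin_seq.
set v := (y *m invmx W *m z) 0 0; set v' := a 0 0 + _.
have -> : 1 + (y *m invmx (W - 1%:M) *m z) 0 0 = v.
  by rewrite /v yWz yW1z mxBE mxNE yw.
have /eq_card-> : [:: v; v; v'] =i [:: v; v'] by move=> t; rewrite !inE orbA orbb.
exact: leq_ltn_trans (card_size _) _.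
Qed.

End LargeFields.

(* For the exhaustive searches, a matrix over a field of prime order p is
   encoded by the list of its rows, with entries natural numbers below p.
   [subn_mod p a b] represents a - b modulo p without truncated subtraction,
   so determinants of encoded matrices are casts of computable naturals. *)
Definition subn_mod p a b := (a + p.-1 * b)%N.

Fixpoint tuples (T : Type) (xs : seq T) k : seq (seq T) :=
  if k is k'.+1 then [seq x :: s | x <- xs, s <- tuples xs k'] else [:: [::]].

Definition code_entry (s : seq (seq nat)) i j := nth 0 (nth [::] s i) j.

Definition code_sub p (e e' : nat -> nat -> nat) i j := subn_mod p (e i j) (e' i j).

Definition code_id (i j : nat) : nat := i == j.

Definition codes_avoidable p n (detc : (nat -> nat -> nat) -> nat) :=
  let codes := tuples (tuples (iota 0 p) n) n in
  all (fun m => has (fun x =>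
         [&& ~~ (p %| detc (code_entry x)),
             ~~ (p %| detc (code_sub p (code_entry x) code_id))
           & ~~ (p %| detc (code_sub p (code_entry x) (code_entry m)))]%N) codes) codes.

Lemma mem_tuples (T : eqType) (xs s : seq T) :
  {subset s <= xs} -> s \in tuples xs (size s).
Proof.
elim: s => [|x s IHs] //= s_xs.
apply: (allpairs_f (fun x s => x :: s)); first exact/s_xs/mem_head.
by apply: IHs => y y_s; apply/s_xs; rewrite inE y_s orbT.
Qed.

Definition mx_of_code (F : fieldType) n (e : nat -> nat -> nat) : 'M[F]_n :=
  \matrix_(i, j) (e i j)%:R.

Section CodeTransfer.
Variables (F : fieldType) (p : nat).
Hypothesis pcharF : p \in [pchar F].

Lemma natr_subn_mod a b : (subn_mod p a b)%:R = a%:R - b%:R :> F.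
Proof.
have p_gt0 := prime_gt0 (pcharf_prime pcharF).
have pred_p : (p.-1)%:R = -1 :> F.
  by apply/eqP; rewrite -addr_eq0 natr1 prednK // pcharf0.
by rewrite natrD natrM pred_p mulN1r.
Qed.

Variable n : nat.

Lemma mx_of_code_sub e e' :
  mx_of_code F n (code_sub p e e') = mx_of_code F n e - mx_of_code F n e'.
Proof. by apply/matrixP => i j; rewrite !mxE natr_subn_mod. Qed.

Lemma mx_of_code_id : mx_of_code F n code_id = 1%:M.
Proof. by apply/matrixP => i j; rewrite !mxE. Qed.

Hypothesis natr_onto : forall x : F, exists k, (k < p)%N && (k%:R == x).

Lemma code_of_mx (A : 'M[F]_n) :
  exists2 s, s \in tuples (tuples (iota 0 p) n) n & A = mx_of_code F n (code_entry s).
Proof.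
pose row i := [seq xchoose (natr_onto (A i j)) | j <- enum 'I_n].
pose s := [seq row i | i <- enum 'I_n].
have size_s : size s = n by rewrite size_map size_enum_ord.
exists s.
  rewrite -{2}size_s; apply: mem_tuples => _ /mapP[i _ ->].
  rewrite -(size_enum_ord n) -(size_map (fun j => xchoose (natr_onto (A i j)))).
  apply: mem_tuples => _ /mapP[j _ ->].
  by rewrite mem_iota add0n; case/andP: (xchooseP (natr_onto (A i j))).
apply/matrixP => i j; rewrite mxE /code_entry.
rewrite (nth_map i) ?size_enum_ord // nth_ord_enum.
rewrite (nth_map j) ?size_enum_ord // nth_ord_enum.
by case/andP: (xchooseP (natr_onto (A i j))) => _ /eqP.
Qed.

Variable detc : (nat -> nat -> nat) -> nat.
Hypothesis det_mx_of_code : forall e, \det (mx_of_code F n e) = (detc e)%:R.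

Lemma unitmx_of_code e : (mx_of_code F n e \in unitmx) = ~~ (p %| detc e)%N.
Proof. by rewrite unitmxE det_mx_of_code unitfE (dvdn_pcharf pcharF). Qed.

Lemma avoidable_of_codes : codes_avoidable p n detc -> forall A : 'M[F]_n, avoidable A.
Proof.
move=> all_avoidable A; have [s s_code ->] := code_of_mx A.
have /hasP[x _ /and3P[x_unit x1_unit xA_unit]] := allP all_avoidable s s_code.
exists (mx_of_code F n (code_entry x)); split.
- by rewrite unitmx_of_code.
- by rewrite -mx_of_code_id -mx_of_code_sub unitmx_of_code.
- by rewrite -mx_of_code_sub unitmx_of_code.
Qed.

End CodeTransfer.

Definition det2_code p (e : nat -> nat -> nat) :=
  subn_mod p (e 0 0 * e 1 1) (e 0 1 * e 1 0)%N.

Definition det3_code p (e : nat -> nat -> nat) :=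
  subn_mod p (e 0 0 * e 1 1 * e 2 2 + e 0 1 * e 1 2 * e 2 0 + e 0 2 * e 1 0 * e 2 1)
             (e 0 0 * e 1 2 * e 2 1 + e 0 1 * e 1 0 * e 2 2 + e 0 2 * e 1 1 * e 2 0)%N.

Lemma det_mx_of_code2 (F : fieldType) p e : p \in [pchar F] ->
  \det (mx_of_code F 2 e) = (det2_code p e)%:R.
Proof. by move=> pcharF; rewrite det_mx22 !mxE natr_subn_mod // !natrM. Qed.

Lemma det_mx_of_code3 (F : fieldType) p e : p \in [pchar F] ->
  \det (mx_of_code F 3 e) = (det3_code p e)%:R.
Proof. by move=> pcharF; rewrite det_mx33 !mxE natr_subn_mod // !natrD !natrM. Qed.

Lemma codes_avoidable_dim2_char3 : codes_avoidable 3 2 (det2_code 3).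
Proof. by vm_compute. Qed.

Lemma codes_avoidable_dim3_char2 : codes_avoidable 2 3 (det3_code 2).
Proof. by vm_compute. Qed.

Lemma avoidable_card3 (F : finFieldType) n (A : 'M[F]_n.+2) : #|F| = 3 -> avoidable A.
Proof.
move=> F_3; have pcharF : 3 \in [pchar F] by apply: pchar_card_prime.
elim: n A => [|n IHn] A.
  apply: (avoidable_of_codes pcharF (natr_onto_card_prime _ F_3) _ codes_avoidable_dim2_char3) => //.
  by move=> e; apply: det_mx_of_code2.
change 'M[F]_(1 + n.+2) in A; rewrite -[A]submxK.
by apply: avoidable_block_card_gt2; rewrite ?F_3.
Qed.

Section Card2.
Variable F : finFieldType.
Hypothesis F_2 : #|F| = 2.

Let pcharF : 2 \in [pchar F]. Proof. exact: pchar_card_prime. Qed.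

Lemma card2_elemP (x : F) : x = 0 \/ x = 1.
Proof.
have /existsP : [exists k : 'I_2, k%:R == x].
  have [k /andP[k_lt2 /eqP <-]] := natr_onto_card_prime (isT : prime 2) F_2 x.
  by apply/existsP; exists (Ordinal k_lt2).
by case=> -[[|[|]] //= _ /eqP <-]; [left | right].
Qed.

Lemma oppmx_card2 m n (A : 'M[F]_(m, n)) : - A = A.
Proof. by rewrite -scaleN1r oppr_pchar2 // scale1r. Qed.

Lemma row_free_col_mx_card2 n (u v : 'rV[F]_n) :
  u != 0 -> v != 0 -> u != v -> row_free (col_mx u v).
Proof.
move=> u_nz v_nz u_v; apply: inj_row_free => w.
rewrite -[w]hsubmxK mul_row_col [lsubmx w]mx11_scalar [rsubmx w]mx11_scalar !mul_scalar_mx.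
case: (card2_elemP (lsubmx w 0 0)) => ->; case: (card2_elemP (rsubmx w 0 0)) => ->;
  rewrite ?scale0r ?scale1r ?add0r ?addr0 => uv0.
- by rewrite !raddf0 row_mx0.
- by rewrite uv0 eqxx in v_nz.
- by rewrite uv0 eqxx in u_nz.
- by move/eqP: uv0; rewrite addr_eq0 oppmx_card2 (negbTE u_v).
Qed.

Lemma avoidable_block_card2 n (a : 'M[F]_1) b c (D : 'M[F]_n) :
  avoidable D -> b != 0 -> avoidable (block_mx a b c D).
Proof.
move=> [W avW] b_nz; have [W_unit W1_unit _] := avW.
pose u := b *m invmx W; pose v := b *m invmx (W - 1%:M).
have b_u : b = u *m W by rewrite mulmxKV.
have b_v : b = v *m (W - 1%:M) by rewrite mulmxKV.
have u_nz : u != 0 by apply: contraNneq b_nz; rewrite b_u => ->; rewrite mul0mx.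
have v_nz : v != 0 by apply: contraNneq b_nz; rewrite b_v => ->; rewrite mul0mx.
have u_v : u != v.
  apply: contraNneq u_nz => u_eq_v; apply/eqP.
  by move/eqP: b_v; rewrite {1}b_u u_eq_v mulmxBr mulmx1 -subr_eq0 opprB addrC subrK => /eqP.
have [B uvB] := row_freeP (row_free_col_mx_card2 u_nz v_nz u_v).
(* z solves u z = a and v z = a - 1, so all three forbidden values are a 0 0. *)
pose z := B *m col_mx a (a - 1%:M).
have /eq_col_mx[uz vz] : col_mx (u *m z) (v *m z) = col_mx a (a - 1%:M).
  by rewrite -mul_col_mx /z mulmxA uvB mul1mx.
apply: (avoidable_block (y := b) (z := z) avW); exists (a 0 0 + 1).
rewrite -/u -/v uz vz subrr !mul0mx mxBE scalar_mx11E mxE addr0 [1 + _]addrC subrK.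
by rewrite !inE !orbb -subr_eq0 addrAC subrr add0r oner_eq0.
Qed.

Lemma avoidable_scalar_card2 n (x : F) :
  (forall D : 'M[F]_n.+1, avoidable D) -> avoidable (x%:M : 'M[F]_(1 + n.+1)).
Proof.
move=> avoidable_n.
(* A witness for any matrix of this size avoids 0 and 1, the only scalars of F. *)
have [X [X_unit X1_unit _]] : avoidable (block_mx 0 (delta_mx 0 0) 0 0 : 'M[F]_(1 + n.+1)).
  apply: avoidable_block_card2 (avoidable_n 0) _.
  by apply/eqP => /matrixP/(_ 0 0)/eqP; rewrite !mxE !eqxx oner_eq0.
by exists X; split=> //; case: (card2_elemP x) => ->; rewrite ?(raddf0 (@scalar_mx F _)) ?subr0.
Qed.

Lemma avoidable_block_diag_card2 n (a : 'M[F]_1) (D : 'M[F]_n) :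
  avoidable D -> D != (a 0 0)%:M -> avoidable (block_mx a 0 0 D).
Proof.
move=> avD D_nscalar.
have /existsP[[i j] /= Dij] : [exists ij : 'I_n * 'I_n, D ij.1 ij.2 != (a 0 0)%:M ij.1 ij.2].
  apply: contraNT D_nscalar => /existsPn D_scalar.
  by apply/eqP/matrixP => i j; apply/eqP/negbNE/(D_scalar (i, j)).
pose e : 'rV[F]_n := delta_mx 0 i.
apply: (@avoidable_conj _ _ (block_mx 1%:M e 0 1%:M) (block_mx 1%:M (- e) 0 1%:M)).
  by rewrite mulmx_block !mul1mx !mulmx1 !mul0mx ?mulmx0 ?add0r ?addr0 addNr -scalar_mx_block.
rewrite !mulmx_block !mul1mx !mulmx1 !mul0mx !mulmx0 !add0r !addr0 mul0mx add0r mulNmx.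
apply: avoidable_block_card2 avD _.
apply: contra Dij => /eqP/matrixP/(_ 0 j)/eqP.
rewrite mxBE -rowE [a]mx11_scalar mul_scalar_mx !mxE !eqxx /= subr_eq0 => /eqP <-.
by rewrite mulr_natr mulr1n [j == i]eq_sym.
Qed.

Lemma avoidable_card2_step n (A : 'M[F]_(1 + n.+1)) :
  (forall D : 'M[F]_n.+1, avoidable D) -> avoidable A.
Proof.
move=> avoidable_n; rewrite -[A]submxK.
set a := ulsubmx A; set b := ursubmx A; set c := dlsubmx A; set D := drsubmx A.
have [-> | b_nz] := eqVneq b 0; last exact: avoidable_block_card2.
have [-> | c_nz] := eqVneq c 0; last first.
  by apply: avoidable_tr; rewrite tr_block_mx; apply: avoidable_block_card2; rewrite ?trmx_eq0.
have [-> | D_nscalar] := eqVneq D (a 0 0)%:M; last exact: avoidable_block_diag_card2.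
by rewrite {1}[a]mx11_scalar -scalar_mx_block; apply: avoidable_scalar_card2.
Qed.

Lemma avoidable_card2 n (A : 'M[F]_n.+3) : avoidable A.
Proof.
elim: n A => [|n IHn] A; last exact: avoidable_card2_step.
apply: (avoidable_of_codes pcharF (natr_onto_card_prime _ F_2) _ codes_avoidable_dim3_char2) => //.
by move=> e; apply: det_mx_of_code3.
Qed.

End Card2.

Theorem proposition3p2 (F : finFieldType) (d : nat) :
  (0 < d)%N ->
  ~ ((d, #|F|) \in [:: (1, 2); (1, 3); (2, 2)])%N ->
  forall A : 'M[F]_d, A \in unitmx ->
  exists B C : 'M[F]_d,
    [/\ B \in unitmx, C \in unitmx,
        fixed_point_free B, fixed_point_free C & A = B *m C].
Proof.
move=> d_gt0 d_q_allowed A A_unit; apply: avoidable_fpf_factor A_unit.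
have [F_lt3 | F_gt3 | F_3] := ltngtP #|F| 3.
- have F_2 : #|F| = 2 by apply/eqP; rewrite eqn_leq -ltnS F_lt3 finNzRing_gt1.
  case: d d_gt0 d_q_allowed A => [|[|[|d]]] // _ d_q_allowed A.
  + by case: d_q_allowed; rewrite F_2 !inE.
  + by case: d_q_allowed; rewrite F_2 !inE.
  exact: avoidable_card2.
- exact: avoidable_card_gt3.
case: d d_gt0 d_q_allowed A => [|[|d]] // _ d_q_allowed A.
  by case: d_q_allowed; rewrite F_3 !inE.
exact: avoidable_card3.
Qed.
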